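(* For every $k\in\mathbb Z$, $\mathcal A=\mathbb Z[\mathbb P][x_{k-1},x_k,x_{k+1},x_{k+2}]$.
   Context: Fix positive integers $\ell_1,\ell_2$ and independent variables $p_{i,k}$ ($i=1,2$, $1\le k\le\ell_i$), $p_{i,0}=1$. Let $\mathbb P$ be the group of Laurent monomials in the $p_{i,k}$ and $\mathbb Z[\mathbb P]$ its group ring; let $\mathcal F=\mathbb Q(p_{i,k})(x_1,x_2)$ with $x_1,x_2$ independent. Put $P_1(z)=1+\sum_{k=1}^{\ell_1}p_{1,k}z^k$, $P_2(z)=1+\sum_{k=1}^{\ell_2}p_{2,k}z^k$ and $\overline P_i(z)=z^{\ell_i}P_i(z^{-1})/p_{i,\ell_i}$. Define $x_k\in\mathcal F$ for all $k\in\mathbb Z$ from $x_1,x_2$ by $x_{k+1}x_{k-1}=P_1(x_k)$ if $k\equiv1$, $P_2(x_k)$ if $k\equiv2$, $\overline P_1(x_k)$ if $k\equiv3$, $\overline P_2(x_k)$ if $k\equiv0\pmod4$. Let $\mathcal A$ be the $\mathbb Z[\mathbb P]$-subalgebra of $\mathcal F$ generated by all $x_k$. *)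

From HB Require Import structures.
From mathcomp Require Import all_boot all_order all_algebra.
From mathcomp Require Import fraction.
From mathcomp.multinomials Require Import mpoly.
Unset Printing Implicit Defensive.
Import Order.TTheory GRing.Theory Num.Theory.
Local Open Scope ring_scope.

(* Variables: n = l1 + l2 + 2 indeterminates over Q.
   'X_0 .. 'X_(l1-1)         : p_{1,1} .. p_{1,l1}
   'X_l1 .. 'X_(l1+l2-1)     : p_{2,1} .. p_{2,l2}
   'X_(l1+l2), 'X_(l1+l2+1)  : x_1, x_2 *)
Definition nvars (l1 l2 : nat) : nat := (l1 + l2).+2.

Definition Fld (l1 l2 : nat) : fieldType := {fraction {mpoly rat[nvars l1 l2]}}.

Definition var (l1 l2 : nat) (j : nat) : Fld l1 l2 :=
  tofrac ('X_(inord j) : {mpoly rat[nvars l1 l2]}).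

(* p_{i,k}, with p_{i,0} = 1; meaningful for i in {1,2}, 0 <= k <= l_i. *)
Definition pv (l1 l2 : nat) (i k : nat) : Fld l1 l2 :=
  if k == 0%N then 1
  else if i == 1%N then var l1 l2 k.-1 else var l1 l2 (l1 + k.-1).

Definition ell (l1 l2 : nat) (i : nat) : nat := if i == 1%N then l1 else l2.

Definition pidx (l1 l2 : nat) (i k : nat) : Prop :=
  (i = 1%N \/ i = 2%N) /\ (1 <= k <= ell l1 l2 i)%N.

Definition Ppoly (l1 l2 : nat) (i : nat) (z : Fld l1 l2) : Fld l1 l2 :=
  1 + \sum_(1 <= k < (ell l1 l2 i).+1) pv l1 l2 i k * z ^+ k.

(* Pbar_i(z) = z^{l_i} P_i(z^{-1}) / p_{i,l_i}
             = (sum_{k=0}^{l_i} p_{i,k} z^{l_i - k}) / p_{i,l_i} *)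
Definition Pbar (l1 l2 : nat) (i : nat) (z : Fld l1 l2) : Fld l1 l2 :=
  (\sum_(0 <= k < (ell l1 l2 i).+1) pv l1 l2 i k * z ^+ (ell l1 l2 i - k))
    / pv l1 l2 i (ell l1 l2 i).

(* exchange polynomial used in x_{j+1} x_{j-1} = Q_j(x_j) *)
Definition Qexch (l1 l2 : nat) (j : int) (z : Fld l1 l2) : Fld l1 l2 :=
  match absz (j %% 4)%Z with
  | 1%N => Ppoly l1 l2 1 z
  | 2%N => Ppoly l1 l2 2 z
  | 3%N => Pbar l1 l2 1 z
  | _ => Pbar l1 l2 2 z
  end.

(* fwd m = (x_{m+1}, x_{m+2}) *)
Fixpoint fwd (l1 l2 : nat) (m : nat) : Fld l1 l2 * Fld l1 l2 :=
  match m with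
  | 0%N => (var l1 l2 (l1 + l2), var l1 l2 (l1 + l2).+1)
  | m'.+1 => let: (a, b) := fwd l1 l2 m' in
             (b, Qexch l1 l2 (m'.+2)%:Z b / a)
  end.

(* bwd m = (x_{1-m}, x_{2-m}) *)
Fixpoint bwd (l1 l2 : nat) (m : nat) : Fld l1 l2 * Fld l1 l2 :=
  match m with
  | 0%N => (var l1 l2 (l1 + l2), var l1 l2 (l1 + l2).+1)
  | m'.+1 => let: (a, b) := bwd l1 l2 m' in
             (Qexch l1 l2 (1 - m'%:Z) a / b, a)
  end.

Definition xseq (l1 l2 : nat) (k : int) : Fld l1 l2 :=
  if (1 <= k)%R then (fwd l1 l2 (absz (k - 1))).1
  else (bwd l1 l2 (absz (1 - k))).1.

(* The Z[P]-subalgebra of F generated by a set S: the smallest subring of F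
   containing all p_{i,k}^{±1} (which generate Z[P] as a ring) and S. *)
Inductive subalg (l1 l2 : nat) (S : Fld l1 l2 -> Prop) : Fld l1 l2 -> Prop :=
| sa_gen y : S y -> subalg l1 l2 S y
| sa_p i k : pidx l1 l2 i k -> subalg l1 l2 S (pv l1 l2 i k)
| sa_pinv i k : pidx l1 l2 i k -> subalg l1 l2 S (pv l1 l2 i k)^-1
| sa_one : subalg l1 l2 S 1
| sa_opp y : subalg l1 l2 S y -> subalg l1 l2 S (- y)
| sa_add y z : subalg l1 l2 S y -> subalg l1 l2 S z -> subalg l1 l2 S (y + z)
| sa_mul y z : subalg l1 l2 S y -> subalg l1 l2 S z -> subalg l1 l2 S (y * z).

Definition Aalg (l1 l2 : nat) : Fld l1 l2 -> Prop :=
  subalg l1 l2 (fun y => exists k : int, y = xseq l1 l2 k).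

Definition Afour (l1 l2 : nat) (k : int) : Fld l1 l2 -> Prop :=
  subalg l1 l2 (fun y => y = xseq l1 l2 (k - 1) \/ y = xseq l1 l2 k
                   \/ y = xseq l1 l2 (k + 1) \/ y = xseq l1 l2 (k + 2)).

(* Write e, a, b, c, d for x_{k-1}, ..., x_{k+3} and R for any subring of F
   containing Z[P], a, b, c, d. The exchange relations read e b = Q_k(a),
   a c = Q_{k+1}(b) = 1 (mod b) and b d = Q_{k+2}(c), where Q_{k+2} is, up to a
   unit u of Z[P], the reciprocal polynomial of Q_k = sum_{i <= L} q_i z^i.
   Hence c^L e b = sum_i q_i c^(L-i) (a c)^i = u b d (mod b R); cancelling b
   puts c^L e in R, and writing (a c)^L = 1 + b t gives
   e = a^L (c^L e) - t Q_k(a) in R. Read backwards (Q_j has period 4 in j) the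
   same argument gives x_{k+4}, so all the four-term algebras coincide.
   Cancelling b needs x_k <> 0: every x_k is a subtraction-free expression in
   the variables, i.e. a ratio of polynomials that are positive at the point
   where all variables equal 1. *)

From HB Require Import structures.
From mathcomp Require Import all_boot all_order all_algebra.
From mathcomp Require Import fraction.
From mathcomp.multinomials Require Import mpoly.
From mathcomp Require Import zify ring.
Set Implicit Arguments.
Unset Strict Implicit.
Unset Printing Implicit Defensive.
Import Order.TTheory GRing.Theory Num.Theory.
Local Open Scope ring_scope.

Section SubringExchange.

Variable F : idomainType.

Definition is_subring (R : F -> Prop) : Prop :=
  [/\ R 1, forall x, R x -> R (- x), forall x y, R x -> R y -> R (x + y)
    & forall x y, R x -> R y -> R (x * y)].

Variables (R : F -> Prop) (hR : is_subring R).

Let R1 : R 1. Proof. by case: hR. Qed.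
Let RN x : R x -> R (- x). Proof. by case: hR => _ h _ _; apply: h. Qed.
Let RD x y : R x -> R y -> R (x + y). Proof. by case: hR => _ _ h _; apply: h. Qed.
Let RM x y : R x -> R y -> R (x * y). Proof. by case: hR => _ _ _ h; apply: h. Qed.

Lemma subring0 : R 0.
Proof. by rewrite -(addrN 1); apply/RD/RN. Qed.

Lemma subringX x n : R x -> R (x ^+ n).
Proof. by move=> Rx; elim: n => [|n IHn]; rewrite ?expr0 // exprS; apply: RM. Qed.

Lemma subring_sum I r (P : pred I) (G : I -> F) :
  (forall i, P i -> R (G i)) -> R (\sum_(i <- r | P i) G i).
Proof. exact: (big_ind R subring0 RD). Qed.

Definition eqmod (b x y : F) : Prop := exists2 t, R t & x = y + b * t.

Lemma eqmod_refl b x : eqmod b x x.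
Proof. by exists 0; [exact: subring0 | rewrite mulr0 addr0]. Qed.

Lemma eqmod_mull b z x y : R z -> eqmod b x y -> eqmod b (z * x) (z * y).
Proof.
by move=> Rz [t Rt ->]; exists (z * t); [apply: RM | rewrite mulrDr mulrCA].
Qed.

Lemma eqmod_sum I r (P : pred I) (G H : I -> F) b :
  (forall i, P i -> eqmod b (G i) (H i)) ->
  eqmod b (\sum_(i <- r | P i) G i) (\sum_(i <- r | P i) H i).
Proof.
apply: (big_ind2 (eqmod b)); first exact: eqmod_refl.
by move=> x1 x2 y1 y2 [t Rt ->] [t' Rt' ->]; exists (t + t'); [apply: RD | ring].
Qed.

Lemma eqmod_exp1 b x n : R b -> eqmod b x 1 -> eqmod b (x ^+ n) 1.
Proof.
move=> Rb [s Rs ->]; elim: n => [|n [t Rt IHn]]; first exact: eqmod_refl.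
exists (t + s + b * t * s).
  by apply: RD; [apply: RD | apply: RM; [apply: RM|]].
by rewrite exprSr IHn; ring.
Qed.

Lemma eqmod_reverse (L : nat) (q : nat -> F) (a b c : F) :
  (forall i, (i <= L)%N -> R (q i)) -> R b -> R c -> eqmod b (a * c) 1 ->
  eqmod b (c ^+ L * \sum_(i < L.+1) q i * a ^+ i)
          (\sum_(i < L.+1) q i * c ^+ (L - i)).
Proof.
move=> Rq Rb Rc hac; rewrite mulr_sumr; apply: eqmod_sum => i _.
have -> : c ^+ L * (q i * a ^+ i) = q i * c ^+ (L - i) * (a * c) ^+ i.
  by rewrite exprMn -{1}(subnK (leq_ord i)) exprD; ring.
rewrite -[X in eqmod _ _ X]mulr1.
by apply: eqmod_mull; [apply/RM/subringX/Rc/Rq/leq_ord | apply: eqmod_exp1].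
Qed.

Lemma mem_of_exchange (L : nat) (q : nat -> F) (a b c v e : F) :
  (forall i, (i <= L)%N -> R (q i)) -> R a -> R b -> R c -> R v -> b != 0 ->
  eqmod b (a * c) 1 ->
  e * b = \sum_(i < L.+1) q i * a ^+ i ->
  b * v = \sum_(i < L.+1) q i * c ^+ (L - i) ->
  R e.
Proof.
move=> Rq Ra Rb Rc Rv b0 hac he hv.
have Reb : R (e * b).
  by rewrite he; apply: subring_sum => i _; apply/RM/subringX/Ra/Rq/leq_ord.
have Rce : R (c ^+ L * e).
  have [w Rw ew] := eqmod_reverse Rq Rb Rc hac.
  have : b * (c ^+ L * e) = b * (v + w) by rewrite mulrDr hv -ew -he; ring.
  by move/(mulfI b0) => ->; apply: RD.
have [t Rt ht] := eqmod_exp1 L Rb hac.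
have -> : e = a ^+ L * (c ^+ L * e) - t * (e * b).
  by rewrite mulrA -exprMn ht; ring.
by apply/RD/RN/RM/Reb/Rt/RM/Rce/subringX.
Qed.

End SubringExchange.

Section PositiveRatios.

Variable n : nat.
Local Notation F := {fraction {mpoly rat[n]}}.

Definition pos_at_one (f : {mpoly rat[n]}) : bool := 0 < f.@[fun _ => 1].

Definition posF (z : F) : Prop :=
  exists f g, [/\ pos_at_one f, pos_at_one g & z = tofrac f / tofrac g].

Lemma pos_at_one_neq0 f : pos_at_one f -> f != 0.
Proof. by apply: contraTneq => ->; rewrite /pos_at_one meval0 ltxx. Qed.

Lemma posF_neq0 z : posF z -> z != 0.
Proof.
move=> [f [g [/pos_at_one_neq0 f0 /pos_at_one_neq0 g0 ->]]].
by rewrite mulf_neq0 ?invr_eq0 ?tofrac_eq0.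
Qed.

Lemma posF_tofrac f : pos_at_one f -> posF (tofrac f).
Proof. by exists f, 1; rewrite /pos_at_one meval1 ltr01 tofrac1 divr1. Qed.

Lemma posF1 : posF 1.
Proof. by rewrite -tofrac1; apply: posF_tofrac; rewrite /pos_at_one meval1. Qed.

Lemma posFM z z' : posF z -> posF z' -> posF (z * z').
Proof.
move=> [f [g [hf hg ->]]] [f' [g' [hf' hg' ->]]].
exists (f * f'), (g * g'); rewrite /pos_at_one !mevalM !mulr_gt0 //.
by split=> //; rewrite mulf_div !tofracM.
Qed.

Lemma posFV z : posF z -> posF z^-1.
Proof. by move=> [f [g [hf hg ->]]]; exists g, f; rewrite invfM invrK mulrC. Qed.

Lemma posFD z z' : posF z -> posF z' -> posF (z + z').
Proof.
move=> [f [g [hf hg ->]]] [f' [g' [hf' hg' ->]]].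
have g0 : tofrac g != 0 :> F by rewrite tofrac_eq0 pos_at_one_neq0.
have g0' : tofrac g' != 0 :> F by rewrite tofrac_eq0 pos_at_one_neq0.
exists (f * g' + f' * g), (g * g'); split.
- by rewrite /pos_at_one mevalD !mevalM addr_gt0 ?mulr_gt0.
- by rewrite /pos_at_one mevalM mulr_gt0.
by rewrite (addf_div _ _ g0 g0') tofracD !tofracM.
Qed.

Lemma posFX z k : posF z -> posF (z ^+ k).
Proof.
move=> hz; elim: k => [|k IHk]; first by rewrite expr0; exact: posF1.
by rewrite exprS; exact: posFM.
Qed.

Lemma posF_sum k (G : nat -> F) :
  (forall i, posF (G i)) -> posF (\sum_(i < k.+1) G i).
Proof.
move=> hG; elim: k => [|k IHk]; first by rewrite big_ord1.
by rewrite big_ord_recr; apply: posFD.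
Qed.

End PositiveRatios.

Lemma modz4_lt (j : int) : (absz (j %% 4)%Z < 4)%N.
Proof.
have : (0 <= (j %% 4)%Z)%R by apply: modz_ge0.
have : ((j %% 4)%Z < 4)%R by apply: ltz_pmod.
lia.
Qed.

Lemma modz4D2 (j : int) : absz ((j + 2) %% 4)%Z = ((absz (j %% 4)%Z + 2) %% 4)%N.
Proof.
rewrite -modzDml -[(j %% 4)%Z]gez0_abs ?modz_ge0 //.
by rewrite -PoszD modz_nat.
Qed.

Section ExchangeRelations.

Variables (l1 l2 : nat).
Hypotheses (hl1 : (0 < l1)%N) (hl2 : (0 < l2)%N).

Local Notation F := (Fld l1 l2).
Local Notation p := (pv l1 l2).
Local Notation Q := (Qexch l1 l2).
Local Notation x := (xseq l1 l2).
Local Notation SA := (subalg l1 l2).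

Lemma subalg_is_subring S : is_subring (SA S).
Proof.
by split; [exact: sa_one | exact: sa_opp | exact: sa_add | exact: sa_mul].
Qed.

Lemma subalg_subset (S T : F -> Prop) :
  (forall z, S z -> SA T z) -> forall y, SA S y -> SA T y.
Proof.
move=> hST y; elim=> {y} [y /hST //|i k|i k||y _|y z _ Ty _ Tz|y z _ Ty _ Tz].
- exact: sa_p.
- exact: sa_pinv.
- exact: sa_one.
- exact: sa_opp.
- exact: sa_add.
- exact: sa_mul.
Qed.

Lemma pv_pos i k : posF (p i k).
Proof.
rewrite /pv /var; case: eqP => _; first exact: posF1.
by case: eqP => _; apply: posF_tofrac; rewrite /pos_at_one mevalXU.
Qed.

Lemma pv_neq0 i k : p i k != 0.
Proof. exact: posF_neq0 (pv_pos i k). Qed.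

Lemma pv_mem S i k : (i = 1 \/ i = 2)%N -> (k <= ell l1 l2 i)%N -> SA S (p i k).
Proof.
case: k => [|k] hi hk; first by rewrite /pv eqxx; exact: sa_one.
by apply: sa_p; split.
Qed.

Lemma pv_inv_mem S i : (i = 1 \/ i = 2)%N -> SA S (p i (ell l1 l2 i))^-1.
Proof.
by move=> hi; apply: sa_pinv; split=> //; case: hi => ->; rewrite /ell /=; lia.
Qed.

Lemma Ppoly_sum i z :
  Ppoly l1 l2 i z = \sum_(k < (ell l1 l2 i).+1) p i k * z ^+ k.
Proof.
rewrite /Ppoly [RHS]big_ord_recl /= {2}/pv eqxx mul1r expr0.
by rewrite big_add1 /= big_mkord.
Qed.

Lemma Pbar_sum i z :
  Pbar l1 l2 i z =
  \sum_(k < (ell l1 l2 i).+1) (p i (ell l1 l2 i - k) / p i (ell l1 l2 i)) * z ^+ k.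
Proof.
rewrite /Pbar big_rev_mkord subn0 mulr_suml; apply: eq_bigr => k _.
by rewrite subSS subKn 1?mulrAC // -ltnS.
Qed.

Definition Qdeg (j : int) : nat :=
  match absz (j %% 4)%Z with 1%N | 3%N => l1 | _ => l2 end.

Definition Qcoef (j : int) (i : nat) : F :=
  match absz (j %% 4)%Z with
  | 1%N => p 1 i
  | 2%N => p 2 i
  | 3%N => p 1 (l1 - i) / p 1 l1
  | _ => p 2 (l2 - i) / p 2 l2
  end.

Lemma Qexch_sum j z : Q j z = \sum_(i < (Qdeg j).+1) Qcoef j i * z ^+ i.
Proof.
rewrite /Qexch /Qdeg /Qcoef; case: (absz _) => [|[|[|[|r]]]];
  rewrite ?Ppoly_sum ?Pbar_sum; reflexivity.
Qed.

Lemma Qcoef0 j : Qcoef j 0 = 1.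
Proof.
by rewrite /Qcoef; case: (absz _) => [|[|[|[|r]]]];
  rewrite ?subn0 ?divff ?pv_neq0 // /pv eqxx.
Qed.

Lemma Qcoef_pos j i : posF (Qcoef j i).
Proof.
by rewrite /Qcoef; case: (absz _) => [|[|[|[|r]]]];
  try apply: posFM; try apply: posFV; apply: pv_pos.
Qed.

Lemma Qcoef_mem S j i : (i <= Qdeg j)%N -> SA S (Qcoef j i).
Proof.
rewrite /Qdeg /Qcoef; case: (absz _) => [|[|[|[|r]]]] hi;
  try apply: sa_mul; try exact: (pv_inv_mem S (or_introl erefl));
  try exact: (pv_inv_mem S (or_intror erefl));
  apply: pv_mem; unfold ell; simpl; lia.
Qed.

Lemma Qexch_periodic j : Q (j + 4) = Q j.
Proof. by rewrite /Qexch modzDr. Qed.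

Lemma Qexch_reciprocal j :
  exists2 u, (forall S, SA S u) &
    forall z, u * Q (j + 2) z =
              \sum_(i < (Qdeg j).+1) Qcoef j i * z ^+ (Qdeg j - i).
Proof.
rewrite /Qexch modz4D2 /Qdeg /Qcoef; have := modz4_lt j.
case: (absz _) => [|[|[|[|r]]]] //= _.
- exists (p 2 l2)^-1 => [S|z]; first exact: (pv_inv_mem S (or_intror erefl)).
  rewrite Ppoly_sum mulr_sumr (reindex_inj rev_ord_inj) /=; apply: eq_bigr => i _.
  by rewrite subSS mulrA [_^-1 * _]mulrC.
- exists (p 1 l1) => [S|z]; first by apply: pv_mem; [left | rewrite /ell].
  by rewrite /Pbar mulrC divfK ?pv_neq0 // big_mkord.
- exists (p 2 l2) => [S|z]; first by apply: pv_mem; [right | rewrite /ell].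
  by rewrite /Pbar mulrC divfK ?pv_neq0 // big_mkord.
- exists (p 1 l1)^-1 => [S|z]; first exact: (pv_inv_mem S (or_introl erefl)).
  rewrite Ppoly_sum mulr_sumr (reindex_inj rev_ord_inj) /=; apply: eq_bigr => i _.
  by rewrite subSS mulrA [_^-1 * _]mulrC.
Qed.

Lemma Qexch_pos j z : posF z -> posF (Q j z).
Proof.
move=> hz; rewrite Qexch_sum.
apply: (posF_sum (Qdeg j) (G := fun i : nat => Qcoef j i * z ^+ i)) => i.
by apply: posFM; [exact: Qcoef_pos | exact: posFX].
Qed.

Lemma Qexch_eqmod1 S j z : SA S z -> eqmod (SA S) z (Q j z) 1.
Proof.
move=> Sz; exists (\sum_(i < Qdeg j) Qcoef j i.+1 * z ^+ i).
  apply: (subring_sum (subalg_is_subring S)) => i _.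
  by apply: sa_mul; [apply: Qcoef_mem | apply: (subringX (subalg_is_subring S))].
rewrite Qexch_sum big_ord_recl Qcoef0 expr0 mulr1 mulr_sumr; congr (_ + _).
by apply: eq_bigr => i _; rewrite exprS mulrCA.
Qed.

Lemma fwd_pos m : posF (fwd l1 l2 m).1 /\ posF (fwd l1 l2 m).2.
Proof.
rewrite /var; elim: m => [|m IHm] /=.
  by split; apply: posF_tofrac; rewrite /pos_at_one mevalXU.
case: (fwd l1 l2 m) IHm => a b [pa pb]; split=> //.
by apply: posFM; [exact: Qexch_pos | exact: posFV].
Qed.

Lemma bwd_pos m : posF (bwd l1 l2 m).1 /\ posF (bwd l1 l2 m).2.
Proof.
rewrite /var; elim: m => [|m IHm] /=.
  by split; apply: posF_tofrac; rewrite /pos_at_one mevalXU.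
case: (bwd l1 l2 m) IHm => a b [pa pb]; split=> //.
by apply: posFM; [exact: Qexch_pos | exact: posFV].
Qed.

Lemma xseq_neq0 k : x k != 0.
Proof.
apply: posF_neq0; rewrite /xseq.
by case: ifP => _; [exact: (fwd_pos _).1 | exact: (bwd_pos _).1].
Qed.

Lemma xseq_fwd (n : nat) : x n.+1 = (fwd l1 l2 n).1.
Proof.
rewrite /xseq (_ : 1 <= Posz n.+1 = true)%R; last by lia.
by congr (fwd _ _ _).1; lia.
Qed.

Lemma xseq_bwd (m : nat) : x (1 - m%:Z) = (bwd l1 l2 m).1.
Proof.
case: m => [|m]; first exact: xseq_fwd 0.
rewrite /xseq (_ : 1 <= 1 - Posz m.+1 = false)%R; last by lia.
by congr (bwd _ _ _).1; lia.
Qed.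

Lemma fwdE (n : nat) : fwd l1 l2 n = (x n.+1, x n.+2).
Proof. by rewrite !xseq_fwd /=; case: (fwd l1 l2 n). Qed.

Lemma bwdE (m : nat) : bwd l1 l2 m = (x (1 - m%:Z), x (2 - m%:Z)).
Proof.
rewrite xseq_bwd; case: m => [|m]; first by rewrite (xseq_fwd 1).
rewrite (_ : 2 - Posz m.+1 = 1 - Posz m)%R; last by lia.
by rewrite xseq_bwd /=; case: (bwd l1 l2 m).
Qed.

Lemma xseq_rec_pos (n : nat) : x n.+3 = Q n.+2 (x n.+2) / x n.+1.
Proof. by have /= := fwdE n.+1; rewrite fwdE; case. Qed.

Lemma xseq_rec_neg (m : nat) :
  x (- m%:Z) = Q (1 - m%:Z) (x (1 - m%:Z)) / x (2 - m%:Z).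
Proof.
have -> : x (- m%:Z) = x (1 - m.+1%:Z) by congr x; lia.
by have /= := bwdE m.+1; rewrite bwdE; case=> <-.
Qed.

Lemma xseq_exchange (i j l : int) :
  j = i + 1 -> l = i + 2 -> x i * x l = Q j (x j).
Proof.
move=> -> ->; case: (lerP 1 i) => hi.
- have [n ->] : exists n : nat, i = n.+1 by exists (absz i).-1; lia.
  have -> : (n.+1%:Z + 2 = n.+3)%R by lia.
  have -> : (n.+1%:Z + 1 = n.+2)%R by lia.
  by rewrite xseq_rec_pos mulrC divfK ?xseq_neq0.
- have [m ->] : exists m : nat, i = - m%:Z by exists (absz i); lia.
  have -> : (- m%:Z + 2 = 2 - m%:Z)%R by lia.
  have -> : (- m%:Z + 1 = 1 - m%:Z)%R by lia.
  by rewrite xseq_rec_neg divfK ?xseq_neq0.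
Qed.

Lemma subalg_exchange S j j' (a b c d e : F) :
  SA S a -> SA S b -> SA S c -> SA S d -> b != 0 ->
  e * b = Q j a -> a * c = Q j' b -> b * d = Q (j + 2) c -> SA S e.
Proof.
move=> Sa Sb Sc Sd b0 he hac hbd; have [u Su hu] := Qexch_reciprocal j.
have Sud : SA S (u * d) by apply: sa_mul.
apply: (mem_of_exchange (subalg_is_subring S) (L := Qdeg j) (q := Qcoef j) _
  Sa Sb Sc Sud b0).
- exact: Qcoef_mem.
- by rewrite hac; apply: Qexch_eqmod1.
- by rewrite he Qexch_sum.
- by rewrite mulrCA hbd hu.
Qed.

Local Notation A4 := (Afour l1 l2).

Lemma Afour_gen k i : (k - 1 <= i)%R -> (i <= k + 2)%R -> A4 k (x i).
Proof.
move=> hlo hhi; apply: sa_gen.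
have : i = k - 1 \/ i = k \/ i = k + 1 \/ i = k + 2 by lia.
by case=> [->|[->|[->|->]]];
  [left | right; left | right; right; left | right; right; right].
Qed.

Lemma Afour_shift k y : A4 k y <-> A4 (k + 1) y.
Proof.
split; apply: subalg_subset => _ [->|[->|[->|->]]]; try (apply: Afour_gen; lia).
- apply: (@subalg_exchange _ k (k + 1) (x k) (x (k + 1)) (x (k + 2)) (x (k + 3)));
    try (apply: Afour_gen; lia); rewrite ?xseq_neq0 //; apply: xseq_exchange; lia.
- apply: (@subalg_exchange _ (k + 2) (k + 1)
           (x (k + 2)) (x (k + 1)) (x k) (x (k - 1)));
    try (apply: Afour_gen; lia); rewrite ?xseq_neq0 //.
  + by rewrite mulrC; apply: xseq_exchange; lia.
  + by rewrite mulrC; apply: xseq_exchange; lia.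
  + by rewrite mulrC -addrA Qexch_periodic; apply: xseq_exchange; lia.
Qed.

Lemma Afour_shiftn k (n : nat) y : A4 k y <-> A4 (k + n) y.
Proof.
elim: n => [|n IHn]; first by rewrite addr0.
by rewrite -addn1 PoszD addrA; apply: iff_trans IHn (Afour_shift _ _).
Qed.

Lemma Afour_eq k k' y : A4 k y <-> A4 k' y.
Proof.
case: (lerP k k') => hk.
- have -> : k' = k + (absz (k' - k))%:Z by lia.
  exact: Afour_shiftn.
- have -> : k = k' + (absz (k - k'))%:Z by lia.
  by symmetry; apply: Afour_shiftn.
Qed.

End ExchangeRelations.

Theorem theoremA2 (l1 l2 : nat) (hl1 : (0 < l1)%N) (hl2 : (0 < l2)%N) (k : int) :
  forall y : Fld l1 l2, Aalg l1 l2 y <-> Afour l1 l2 k y.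
Proof.
move=> y; split; apply: subalg_subset => z.
- by case=> m ->; apply/(Afour_eq hl1 hl2 m); apply: Afour_gen; lia.
- by case=> [->|[->|[->|->]]]; apply: sa_gen; eexists.
Qed.
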